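(* Let $\kappa$ be a regular cardinal. There is a $(\kappa,\kappa^+)$-Borel set $R\subseteq\kappa^\kappa\times\kappa^\kappa$ which is universal for the $\kappa$-Borel sets, i.e. for every $\kappa$-Borel $A\subseteq\kappa^\kappa$ there is $\xi\in\kappa^\kappa$ such that for all $\eta\in\kappa^\kappa$: $\eta\in A$ if and only if $(\eta,\xi)\in R$.
   Context: For $X\subseteq\kappa$ with $|X|<\kappa$ and $\eta:X\to\kappa$, let $N_\eta=\{\zeta\in\kappa^\kappa\mid\eta\subseteq\zeta\}$; these sets and $\emptyset$ are the basic $\kappa$-open subsets of $\kappa^\kappa$, and the basic $\kappa$-open subsets of $\kappa^\kappa\times\kappa^\kappa$ are the products $N_\eta\times N_\xi$ of basic $\kappa$-open sets. For a cardinal $\lambda$, the $(\kappa,\lambda)$-Borel sets form the smallest class containing the basic $\kappa$-open sets and closed under complements, unions of at most $\lambda$ sets and intersections of at most $\lambda$ sets; $\kappa$-Borel means $(\kappa,\kappa)$-Borel. *)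

From Stdlib Require Import Classical.
Set Implicit Arguments.

Definition inj {A B : Type} (f : A -> B) : Prop := forall x y, f x = f y -> x = y.

(* |X| < |K| for a subset X of K (K well-ordered, so |X| <= |K| always):
   there is no injection of K into X. *)
Definition small (K : Type) (X : K -> Prop) : Prop :=
  ~ exists f : K -> {x : K | X x}, inj f.

(* (K, lt) represents a regular cardinal kappa: a strict well-order that is
   an initial ordinal (every proper initial segment has smaller cardinality),
   is infinite, and every subset of size < kappa is bounded. *)
Record regular_cardinal (K : Type) (lt : K -> K -> Prop) : Prop := {
  rc_wf       : well_founded lt;
  rc_trans    : forall x y z, lt x y -> lt y z -> lt x z;
  rc_total    : forall x y, lt x y \/ x = y \/ lt y x;
  rc_infinite : exists f : nat -> K, inj f;
  rc_initial  : forall b : K, ~ exists f : K -> {x : K | lt x b}, inj f;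
  rc_regular  : forall X : K -> Prop, small X -> exists b, forall x, X x -> lt x b
}.

Definition size_le_kappa (K : Type) (I : Type) : Prop :=
  exists f : I -> K, inj f.

(* index types of cardinality at most kappa^+ : they carry a well-order all of
   whose proper initial segments have cardinality at most kappa *)
Definition size_le_kappa_plus (K : Type) (I : Type) : Prop :=
  exists r : I -> I -> Prop,
    well_founded r /\
    (forall x y z, r x y -> r y z -> r x z) /\
    (forall x y, r x y \/ x = y \/ r y x) /\
    (forall i, exists f : {j : I | r j i} -> K, inj f).

(* basic kappa-open subsets of kappa^kappa: the empty set and the sets
   N_eta = {zeta | eta ⊆ zeta} for eta : X -> kappa with |X| < kappa
   (eta is represented by a total function whose values off X are ignored). *)
Definition basic_open (K : Type) (A : (K -> K) -> Prop) : Prop :=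
  (forall z, ~ A z) \/
  exists (X : K -> Prop) (eta : K -> K),
    small X /\ forall zeta, A zeta <-> (forall x, X x -> zeta x = eta x).

Definition basic_open2 (K : Type) (A : (K -> K) * (K -> K) -> Prop) : Prop :=
  exists U V, basic_open U /\ basic_open V /\
    forall p, A p <-> (U (fst p) /\ V (snd p)).

Inductive borel (S : Type) (basic : (S -> Prop) -> Prop) (sz : Type -> Prop)
  : (S -> Prop) -> Prop :=
| borel_basic A : basic A -> borel basic sz A
| borel_ext A B : borel basic sz A -> (forall s, A s <-> B s) -> borel basic sz B
| borel_compl A : borel basic sz A -> borel basic sz (fun s => ~ A s)
| borel_union (I : Type) (F : I -> S -> Prop) :
    sz I -> (forall i, borel basic sz (F i)) ->
    borel basic sz (fun s => exists i, F i s)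
| borel_inter (I : Type) (F : I -> S -> Prop) :
    sz I -> (forall i, borel basic sz (F i)) ->
    borel basic sz (fun s => forall i, F i s).

Definition kappa_borel (K : Type) (A : (K -> K) -> Prop) : Prop :=
  borel (@basic_open K) (size_le_kappa K) A.

Definition kappa_kappa_plus_borel2 (K : Type) (R : (K -> K) * (K -> K) -> Prop) : Prop :=
  borel (@basic_open2 K) (size_le_kappa_plus K) R.

From Stdlib Require Import Classical ClassicalEpsilon FunctionalExtensionality
  PropExtensionality ProofIrrelevance Lia Arith List FinFun Inverse_Image.

(* Hessenberg's theorem gives a pairing function on kappa, so a function
   xi : kappa -> kappa can code a kappa-branching graph whose leaves test
   coordinates [eta x = v] and whose other nodes are NOR gates.  Unfolding a
   kappa-Borel code of a set A gives a well-founded such graph whose root is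
   true at eta exactly when eta is in A.  R (eta, xi) says that the root of the
   graph coded by xi evaluates to true at eta by an evaluation of some rank
   below kappa^+.  For a fixed rank this is a kappa-Borel condition on
   (eta, xi), and ranks, taken as Brouwer trees over kappa up to equivalence,
   form a well-order whose proper initial segments have size kappa, so R is a
   union of kappa^+ kappa-Borel sets. *)

(** * Embeddings and finiteness *)

Definition embeds {X Y : Type} (A : X -> Prop) (B : Y -> Prop) : Prop :=
  exists f : X -> Y, (forall x, A x -> B (f x)) /\
    (forall x y, A x -> A y -> f x = f y -> x = y).

Definition square {X : Type} (A : X -> Prop) : X * X -> Prop :=
  fun p => A (fst p) /\ A (snd p).

Lemma embeds_incl {X : Type} (A B : X -> Prop) :
  (forall x, A x -> B x) -> embeds A B.
Proof. intros H. exists (fun x => x). auto. Qed.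

Lemma embeds_trans {X Y Z : Type} {A : X -> Prop} {B : Y -> Prop} {C : Z -> Prop} :
  embeds A B -> embeds B C -> embeds A C.
Proof.
  intros [f [Hf Hfi]] [g [Hg Hgi]]. exists (fun x => g (f x)). split; auto.
Qed.

Lemma embeds_square {X Y : Type} (A : X -> Prop) (B : Y -> Prop) :
  embeds A B -> embeds (square A) (square B).
Proof.
  intros [f [Hf Hfi]]. exists (fun p => (f (fst p), f (snd p))).
  unfold square. split.
  - intros [x y] [Hx Hy]. split; simpl in *; auto.
  - intros [x y] [x' y'] [Hx Hy] [Hx' Hy'] E; simpl in *. injection E; intros.
    f_equal; auto.
Qed.

Definition finite {X : Type} (A : X -> Prop) : Prop :=
  exists N, embeds A (fun k => k < N).

Definition infinite {X : Type} (A : X -> Prop) : Prop :=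
  embeds (fun _ : nat => True) A.

Lemma finite_not_infinite {X : Type} (A : X -> Prop) : finite A -> ~ infinite A.
Proof.
  intros [N HN] Hinf. destruct (embeds_trans Hinf HN) as [f [Hf Hfi]].
  assert (Hnodup : NoDup (map f (seq 0 (S N)))).
  { apply Injective_map_NoDup_in; [intros; apply Hfi; auto | apply seq_NoDup]. }
  apply NoDup_incl_length with (l' := seq 0 N) in Hnodup.
  - rewrite length_map, !length_seq in Hnodup. lia.
  - intros y Hy. apply in_map_iff in Hy. destruct Hy as [x [<- _]].
    apply in_seq. specialize (Hf x I). lia.
Qed.

Lemma finite_square {X : Type} (A : X -> Prop) : finite A -> finite (square A).
Proof.
  intros [N [f [Hf Hfi]]]. exists (N * N).
  exists (fun p => f (fst p) * N + f (snd p)). unfold square. split.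
  - intros [x y] [Hx Hy]. pose proof (Hf x Hx). pose proof (Hf y Hy). simpl in *. nia.
  - intros [x y] [x' y'] [Hx Hy] [Hx' Hy'] E; simpl in *.
    pose proof (Hf y Hy). pose proof (Hf y' Hy').
    assert (f x = f x') by nia. assert (f y = f y') by nia. f_equal; auto.
Qed.

Lemma finite_add_point {X : Type} (A : X -> Prop) (c : X) :
  finite A -> finite (fun x => A x \/ x = c).
Proof.
  intros [N [f [Hf Hfi]]]. exists (S N).
  exists (fun x => if excluded_middle_informative (x = c) then N else f x). split.
  - intros x Hx. destruct excluded_middle_informative as [E|E]; [lia|].
    destruct Hx as [Hx|Hx]; [specialize (Hf x Hx); lia|contradiction].
  - intros x y Hx Hy.
    destruct (excluded_middle_informative (x = c)) as [Ex|Ex];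
    destruct (excluded_middle_informative (y = c)) as [Ey|Ey]; intros E; try congruence.
    + destruct Hy as [Hy|]; [|contradiction]. specialize (Hf y Hy). lia.
    + destruct Hx as [Hx|]; [|contradiction]. specialize (Hf x Hx). lia.
    + destruct Hx as [Hx|], Hy as [Hy|]; try contradiction. apply Hfi; auto.
Qed.

(* Hilbert's hotel: shift the copy of [nat] inside [B] by one to free [y0]. *)
Lemma infinite_shift {Y : Type} (B : Y -> Prop) : infinite B ->
  exists (s : Y -> Y) (y0 : Y), B y0 /\ (forall y, B y -> B (s y)) /\
    (forall y y', s y = s y' -> y = y') /\ (forall y, s y <> y0).
Proof.
  intros [h [Hh Hhi]]. assert (hinj : forall i j, h i = h j -> i = j) by auto.
  set (idx := fun y => epsilon (inhabits 0) (fun k => y = h k)).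
  assert (Hidx : forall k, h (idx (h k)) = h k).
  { intros k. symmetry. apply (epsilon_spec _ (fun i => h k = h i)). eauto. }
  exists (fun y => if excluded_middle_informative (exists k, y = h k)
                   then h (S (idx y)) else y), (h 0).
  split; [auto|split; [|split]].
  - intros y Hy. destruct excluded_middle_informative; auto.
  - intros y y'.
    destruct (excluded_middle_informative (exists k, y = h k)) as [[k ->]|Hy];
    destruct (excluded_middle_informative (exists k, y' = h k)) as [[k' ->]|Hy'];
    intros E; auto.
    + apply hinj in E. injection E. intros E'. rewrite <- (Hidx k), <- (Hidx k'), E'. auto.
    + exfalso. apply Hy'. eauto.
    + exfalso. apply Hy. eauto.
  - intros y. destruct excluded_middle_informative as [_|Hy].
    + intros E. apply hinj in E. discriminate.
    + intros ->. apply Hy. eauto.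
Qed.

Lemma embeds_add_point {X Y : Type} (A : X -> Prop) (B : Y -> Prop) (c : X) :
  infinite B -> embeds A B -> embeds (fun x => A x \/ x = c) B.
Proof.
  intros Hinf [f [Hf Hfi]].
  destruct (infinite_shift B Hinf) as [s [y0 [Hy0 [Hs [Hsi Hsy0]]]]].
  exists (fun x => if excluded_middle_informative (x = c) then y0 else s (f x)). split.
  - intros x Hx. destruct excluded_middle_informative; auto.
    destruct Hx; [auto|contradiction].
  - intros x y Hx Hy.
    destruct (excluded_middle_informative (x = c)) as [Ex|Ex];
    destruct (excluded_middle_informative (y = c)) as [Ey|Ey]; intros E.
    + congruence.
    + exfalso. exact (Hsy0 _ (eq_sym E)).
    + exfalso. exact (Hsy0 _ E).
    + destruct Hx as [Hx|], Hy as [Hy|]; try contradiction. apply Hfi; auto.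
Qed.

(* Transfinite recursion along [r]: send [w] to some element of [B] not yet
   used on the segment below [w]; such an element exists, as otherwise [B]
   would embed into that segment. *)
Lemma embeds_of_segments {W Y : Type} (r : W -> W -> Prop) (A : W -> Prop)
  (B : Y -> Prop) (y0 : Y) :
  well_founded r -> (forall x y, r x y \/ x = y \/ r y x) ->
  (forall w, A w -> ~ embeds B (fun w' => A w' /\ r w' w)) -> embeds A B.
Proof.
  intros Hwf Htot Hseg.
  set (fresh := fun (w : W) (g : forall w', r w' w -> Y) =>
    epsilon (inhabits y0) (fun y => B y /\ forall w' (Hr : r w' w), A w' -> g w' Hr <> y)).
  set (g := Fix Hwf (fun _ => Y) fresh).
  assert (Hg : forall w, g w = epsilon (inhabits y0)
                 (fun y => B y /\ forall w', r w' w -> A w' -> g w' <> y)).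
  { intros w. unfold g. rewrite Fix_eq; [reflexivity|].
    intros x g1 g2 E. unfold fresh. do 3 f_equal.
    apply functional_extensionality_dep; intros y. apply propositional_extensionality.
    split; intros [HB Hy]; split; auto; intros w' Hr; [rewrite <- E|rewrite E]; auto. }
  assert (Hfresh : forall w, A w ->
            B (g w) /\ forall w', r w' w -> A w' -> g w' <> g w).
  { intros w Aw. rewrite (Hg w). apply epsilon_spec. apply NNPP. intros Hused.
    apply (Hseg w Aw).
    assert (Hpre : forall y, B y -> exists w', (A w' /\ r w' w) /\ g w' = y).
    { intros y By. apply NNPP. intros Hy. apply Hused. exists y. split; auto.
      intros w' Hr Aw' E. apply Hy. eauto. }
    exists (fun y => epsilon (inhabits w) (fun w' => (A w' /\ r w' w) /\ g w' = y)).
    split.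
    - intros y By. apply (epsilon_spec (inhabits w) _ (Hpre y By)).
    - intros y y' By By' E.
      destruct (epsilon_spec (inhabits w) _ (Hpre y By)) as [_ Ey].
      destruct (epsilon_spec (inhabits w) _ (Hpre y' By')) as [_ Ey'].
      rewrite <- Ey, <- Ey', E. reflexivity. }
  exists g. split; [apply Hfresh|].
  intros x y Ax Ay E. destruct (Htot x y) as [Hr|[Hr|Hr]]; auto; exfalso.
  - exact (proj2 (Hfresh y Ay) x Hr Ax E).
  - exact (proj2 (Hfresh x Ax) y Hr Ay (eq_sym E)).
Qed.

(** * Hessenberg's theorem *)

Section Hessenberg.
Variables (K : Type) (lt : K -> K -> Prop) (HK : regular_cardinal lt).

Let lt_wf := rc_wf HK.
Let lt_trans := rc_trans HK.
Let lt_total := rc_total HK.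

Lemma lt_irrefl x : ~ lt x x.
Proof.
  induction x as [x IH] using (well_founded_ind lt_wf). intros H. exact (IH x H H).
Qed.

Lemma lt_minimal (Q : K -> Prop) :
  (exists x, Q x) -> exists c, Q c /\ forall c', lt c' c -> ~ Q c'.
Proof.
  intros [x Qx]. apply NNPP. intros Hnone. revert Qx.
  induction x as [x IH] using (well_founded_ind lt_wf). intros Qx.
  apply Hnone. exists x. split; [exact Qx|]. intros c' Hc' Qc'. exact (IH c' Hc' Qc').
Qed.

Definition below (m : K) : K -> Prop := fun x => lt x m.
Definition upto (m : K) : K -> Prop := fun x => lt x m \/ x = m.

Lemma not_embeds_below c : ~ embeds (fun _ : K => True) (below c).
Proof.
  intros [f [Hf Hfi]]. apply (rc_initial HK c).
  exists (fun x => exist _ (f x) (Hf x I)). intros x y E.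
  injection E. apply Hfi; auto.
Qed.

(* Either [m] has a greatest predecessor, which reduces to the induction
   hypothesis, or the predecessors of [m] contain an increasing sequence. *)
Lemma below_finite_or_infinite m : finite (below m) \/ infinite (below m).
Proof.
  induction m as [m IH] using (well_founded_ind lt_wf).
  destruct (classic (exists x, lt x m)) as [[x0 Hx0]|Hempty].
  2:{ left. exists 0, (fun _ => 0).
       split; [intros x Hx|intros x y Hx]; exfalso; apply Hempty; eauto. }
  destruct (classic (exists p, lt p m /\ forall x, lt x m -> upto p x))
    as [[p [Hp Hmax]]|Hnomax].
  - destruct (IH p Hp) as [Hfin|Hinf].
    + left. destruct (finite_add_point _ p Hfin) as [N HN]. exists N.
      eapply embeds_trans; [apply embeds_incl, Hmax|exact HN].
    + right. eapply embeds_trans; [exact Hinf|].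
      apply embeds_incl. intros x Hx. exact (lt_trans _ _ _ Hx Hp).
  - right.
    destruct (choice (fun x y => lt x m -> lt y m /\ lt x y)) as [next Hnext].
    { intros x. destruct (classic (lt x m)) as [Hx|Hx]; [|exists x; contradiction].
      apply NNPP. intros Hn. apply Hnomax. exists x. split; [exact Hx|].
      intros y Hy. destruct (lt_total y x) as [H|[H|H]]; unfold upto; auto.
      exfalso. apply Hn. exists y. auto. }
    set (seq_m := fix seq_m (k : nat) := match k with 0 => x0 | S k => next (seq_m k) end).
    assert (Hin : forall k, lt (seq_m k) m).
    { induction k; simpl; auto. apply Hnext; auto. }
    assert (Hincr : forall i j, i < j -> lt (seq_m i) (seq_m j)).
    { intros i j Hij. induction Hij; simpl.
      - apply Hnext; auto.
      - eapply lt_trans; [exact IHHij|]. apply Hnext; auto. }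
    exists seq_m. split; [intros; apply Hin|].
    intros i j _ _ E. destruct (lt_eq_lt_dec i j) as [[H|H]|H]; auto; exfalso;
      apply Hincr in H; rewrite E in H; exact (lt_irrefl _ H).
Qed.

Definition lmax (a b : K) : K := if excluded_middle_informative (lt a b) then b else a.

Lemma upto_lmax_l a b : upto (lmax a b) a.
Proof. unfold lmax, upto. destruct excluded_middle_informative; auto. Qed.

Lemma upto_lmax_r a b : upto (lmax a b) b.
Proof.
  unfold lmax, upto. destruct excluded_middle_informative; auto.
  destruct (lt_total a b) as [H|[H|H]]; auto. contradiction.
Qed.

Lemma lmax_cases a b : lmax a b = a \/ lmax a b = b.
Proof. unfold lmax. destruct excluded_middle_informative; auto. Qed.

Lemma upto_trans x y z : upto y x -> upto z y -> upto z x.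
Proof. unfold upto. intros [H|H] [H'|H']; subst; eauto. Qed.

Definition goedel (p q : K * K) : Prop :=
  let (a, b) := p in let (c, d) := q in
  lt (lmax a b) (lmax c d) \/
  (lmax a b = lmax c d /\ (lt a c \/ (a = c /\ lt b d))).

Lemma goedel_wf : well_founded goedel.
Proof.
  intros [a b]. remember (lmax a b) as m eqn:Hm. revert a b Hm.
  induction m as [m IHm] using (well_founded_ind lt_wf).
  intros a. induction a as [a IHa] using (well_founded_ind lt_wf).
  intros b. induction b as [b IHb] using (well_founded_ind lt_wf).
  intros Hm. constructor. intros [c d] [H|[E [H|[<- H]]]]; rewrite <- Hm in *.
  - eapply IHm; eauto.
  - eapply IHa; eauto.
  - eapply IHb; eauto.
Qed.

Lemma goedel_total p q : goedel p q \/ p = q \/ goedel q p.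
Proof.
  destruct p as [a b], q as [c d]. simpl.
  destruct (lt_total (lmax a b) (lmax c d)) as [H|[H|H]]; auto.
  destruct (lt_total a c) as [H1|[<-|H1]]; auto 6.
  destruct (lt_total b d) as [H2|[<-|H2]]; auto 7.
Qed.

Lemma goedel_square_upto p q :
  goedel p q -> square (upto (lmax (fst q) (snd q))) p.
Proof.
  destruct p as [a b], q as [c d]. simpl. intros H.
  assert (Hle : upto (lmax c d) (lmax a b)) by (destruct H as [H|[-> _]]; [left|right]; auto).
  split; apply (upto_trans _ (lmax a b)); auto using upto_lmax_l, upto_lmax_r.
Qed.

(* The inductive step of Hessenberg's theorem, for [D] an infinite cardinal. *)
Lemma square_embeds (D : K -> Prop) :
  (forall x y, lt x y -> D y -> D x) -> infinite D ->
  (forall c, D c -> ~ embeds D (below c)) ->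
  (forall c, D c -> finite (below c) \/ embeds (square (below c)) (below c)) ->
  embeds (square D) D.
Proof.
  intros Ddown Dinf Dcard Dsq. pose proof Dinf as [h _].
  apply (embeds_of_segments goedel _ _ (h 0) goedel_wf goedel_total).
  intros [a b] [Da Db] Hseg. set (g := lmax a b).
  assert (Dg : D g) by (destruct (lmax_cases a b) as [E|E]; unfold g; rewrite E; auto).
  assert (HDg : embeds D (square (upto g))).
  { eapply embeds_trans; [exact Hseg|]. apply embeds_incl.
    intros p [_ Hp]. exact (goedel_square_upto _ _ Hp). }
  destruct (below_finite_or_infinite g) as [Hfin|Hinf].
  - apply (finite_not_infinite D); [|exact Dinf].
    destruct (finite_square _ (finite_add_point _ g Hfin)) as [N HN].
    exists N. eapply embeds_trans; [exact HDg|exact HN].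
  - destruct (Dsq g Dg) as [Hfin|Hsq]; [exact (finite_not_infinite _ Hfin Hinf)|].
    apply (Dcard g Dg). eapply embeds_trans; [exact HDg|].
    eapply embeds_trans; [|exact Hsq]. apply embeds_square.
    apply embeds_add_point; [exact Hinf|apply embeds_incl; auto].
Qed.

Lemma below_finite_or_square_embeds m :
  finite (below m) \/ embeds (square (below m)) (below m).
Proof.
  induction m as [m IH] using (well_founded_ind lt_wf).
  destruct (below_finite_or_infinite m) as [Hfin|Hinf]; [left; exact Hfin|right].
  destruct (lt_minimal (fun c => upto m c /\ embeds (below m) (below c)))
    as [c [[[Hcm|<-] Hc] Hmin]].
  { exists m. split; [right; auto|apply embeds_incl; auto]. }
  - destruct (IH c Hcm) as [Hfin|Hsq].
    + exfalso. apply (finite_not_infinite _ Hfin). eapply embeds_trans; eauto.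
    + eapply embeds_trans; [exact (embeds_square _ _ Hc)|].
      eapply embeds_trans; [exact Hsq|]. apply embeds_incl.
      intros x Hx. exact (lt_trans _ _ _ Hx Hcm).
  - apply square_embeds; auto.
    + intros x y Hxy Hy. exact (lt_trans _ _ _ Hxy Hy).
    + intros c' Hc' Hemb. apply (Hmin c' Hc'). split; [left|]; auto.
Qed.

Lemma pairing : exists pi : K -> K -> K, forall a b c d, pi a b = pi c d -> a = c /\ b = d.
Proof.
  assert (Hsq : embeds (square (fun _ : K => True)) (fun _ : K => True)).
  { apply square_embeds; auto.
    - destruct (rc_infinite HK) as [h hinj]. exists h. split; auto.
    - intros c _. apply not_embeds_below.
    - intros c _. apply below_finite_or_square_embeds. }
  destruct Hsq as [f [_ Hfi]]. exists (fun a b => f (a, b)).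
  intros a b c d E. apply Hfi in E; [|split; auto|split; auto]. injection E; auto.
Qed.

End Hessenberg.

(** * Ranks below kappa^+ *)

Section Ranks.
Variables (K : Type) (pi : K -> K -> K) (h : nat -> K).
Hypothesis pi_inj : forall a b c d, pi a b = pi c d -> a = c /\ b = d.
Hypothesis h_inj : inj h.

Let K_infinite : infinite (fun _ : K => True).
Proof. exists h. split; auto. Qed.

Lemma embeds_union {X : Type} (F : K -> X -> Prop) :
  (forall j, embeds (F j) (fun _ : K => True)) ->
  embeds (fun x => exists j, F j x) (fun _ : K => True).
Proof.
  intros HF.
  destruct (choice (fun j (e : X -> K) =>
              forall x y, F j x -> F j y -> e x = e y -> x = y)) as [e He].
  { intros j. destruct (HF j) as [e [_ He]]. eauto. }
  destruct (choice (fun x j => (exists j, F j x) -> F j x)) as [J HJ].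
  { intros x. destruct (classic (exists j, F j x)) as [[j Hj]|Hn].
    - exists j. auto.
    - exists (h 0). tauto. }
  exists (fun x => pi (J x) (e (J x) x)). split; auto.
  intros x y Hx Hy E. apply pi_inj in E. destruct E as [EJ Ee].
  rewrite <- EJ in Ee. apply (He (J x)); auto. rewrite EJ. auto.
Qed.

Inductive tree : Type := tleaf | tsup (f : K -> tree).

Fixpoint tle (s t : tree) : Prop :=
  match s with
  | tleaf => True
  | tsup f => forall k, match t with tleaf => False | tsup g => exists j, tle (f k) (g j) end
  end.

Definition tlt (s t : tree) : Prop :=
  match t with tleaf => False | tsup g => exists j, tle s (g j) end.

Definition tequiv (s t : tree) : Prop := tle s t /\ tle t s.

Lemma tle_sup f t : tle (tsup f) t <-> forall k, tlt (f k) t.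
Proof. destruct t; simpl; tauto. Qed.

Lemma tle_refl t : tle t t.
Proof. induction t as [|f IH]; simpl; eauto. Qed.

Lemma tle_trans s t u : tle s t -> tle t u -> tle s u.
Proof.
  revert t u. induction s as [|f IH]; intros t u Hst Htu; simpl; auto.
  intros k. specialize (Hst k). destruct t as [|g]; [contradiction|].
  destruct Hst as [j Hj]. specialize (Htu j). destruct u as [|l]; [contradiction|].
  destruct Htu as [i Hi]. eauto.
Qed.

Lemma tlt_tle s t : tlt s t -> tle s t.
Proof.
  revert t. induction s as [|f IH]; intros [|g] Hst; simpl in *; auto.
  destruct Hst as [j Hj]. intros k. exists j. apply IH. apply (Hj k).
Qed.

Lemma tlt_tle_trans s t u : tlt s t -> tle t u -> tlt s u.
Proof.
  destruct t as [|g]; [contradiction|]. intros [j Hj] Htu.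
  specialize (Htu j). destruct u as [|l]; [contradiction|].
  destruct Htu as [i Hi]. exists i. eapply tle_trans; eauto.
Qed.

Lemma tlt_trans s t u : tlt s t -> tlt t u -> tlt s u.
Proof. intros Hst Htu. eapply tlt_tle_trans; eauto using tlt_tle. Qed.

Lemma tle_or_tlt s t : tle s t \/ tlt t s.
Proof.
  revert t. induction s as [|f IH]; intros t; [left; exact I|].
  destruct (classic (forall k, tlt (f k) t)) as [Hall|Hn].
  - left. apply tle_sup. exact Hall.
  - right. apply not_all_ex_not in Hn. destruct Hn as [k Hk].
    exists k. destruct t as [|g]; simpl; auto.
    intros l. destruct (IH k (g l)) as [H|H]; auto.
    exfalso. apply Hk. exists l. exact H.
Qed.

Lemma tlt_wf : well_founded tlt.
Proof.
  assert (Hacc : forall t s, tle s t -> Acc tlt s).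
  { induction t as [|g IH]; intros s Hs; constructor; intros u Hu;
      pose proof (tlt_tle_trans _ _ _ Hu Hs) as Hut; [contradiction|].
    destruct Hut as [j Hj]. exact (IH j u Hj). }
  intros t. exact (Hacc t t (tle_refl t)).
Qed.

(* Ranks, the ordinals below kappa^+, are Brouwer trees up to [tequiv],
   represented by canonical trees chosen with [epsilon]. *)
Definition canon (t : tree) : tree := epsilon (inhabits tleaf) (fun s => tequiv s t).

Lemma canon_equiv t : tequiv (canon t) t.
Proof.
  unfold canon. apply (epsilon_spec _ (fun s => tequiv s t)).
  exists t. split; apply tle_refl.
Qed.

Lemma canon_ext s t : tequiv s t -> canon s = canon t.
Proof.
  intros [Hst Hts]. unfold canon. f_equal.
  apply functional_extensionality; intros u. apply propositional_extensionality.
  split; intros [H1 H2]; split; eapply tle_trans; eauto.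
Qed.

Definition rank : Type := { t : tree | canon t = t }.

Definition to_rank (t : tree) : rank :=
  exist _ (canon t) (canon_ext _ _ (canon_equiv t)).

Lemma tle_to_rank t : tle t (proj1_sig (to_rank t)).
Proof. exact (proj2 (canon_equiv t)). Qed.

Definition rank_lt (x y : rank) : Prop := tlt (proj1_sig x) (proj1_sig y).

Lemma rank_eq (x y : rank) : tequiv (proj1_sig x) (proj1_sig y) -> x = y.
Proof.
  destruct x as [x Hx], y as [y Hy]; simpl. intros E. apply canon_ext in E.
  apply subset_eq_compat. congruence.
Qed.

Lemma rank_lt_total x y : rank_lt x y \/ x = y \/ rank_lt y x.
Proof.
  unfold rank_lt.
  destruct (tle_or_tlt (proj1_sig x) (proj1_sig y)) as [H1|H1]; auto.
  destruct (tle_or_tlt (proj1_sig y) (proj1_sig x)) as [H2|H2]; auto.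
  right; left. apply rank_eq. split; auto.
Qed.

Lemma rank_segment_embeds t :
  embeds (fun s : rank => tle (proj1_sig s) t) (fun _ : K => True).
Proof.
  induction t as [|g IH].
  - assert (Hleaf : forall s, tle s tleaf -> s = tleaf).
    { intros [|f] Hs; [reflexivity|destruct (Hs (h 0))]. }
    exists (fun _ => h 0). split; auto. intros x y Hx Hy _. apply rank_eq.
    rewrite (Hleaf _ Hx), (Hleaf _ Hy). split; exact I.
  - assert (Hunion := embeds_union _ IH).
    eapply embeds_trans; [|exact (embeds_add_point _ _ (to_rank (tsup g)) K_infinite Hunion)].
    apply embeds_incl. intros s Hs.
    destruct (tle_or_tlt (tsup g) (proj1_sig s)) as [H|H]; [right|left; exact H].
    apply rank_eq. split.
    + eapply tle_trans; [exact Hs|apply tle_to_rank].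
    + eapply tle_trans; [apply (proj1 (canon_equiv _))|exact H].
Qed.

Lemma rank_size : size_le_kappa_plus K rank.
Proof.
  exists rank_lt. split; [|split; [|split]].
  - exact (wf_inverse_image _ _ tlt _ tlt_wf).
  - intros x y z. apply tlt_trans.
  - apply rank_lt_total.
  - intros i. destruct (rank_segment_embeds (proj1_sig i)) as [f [_ Hfi]].
    exists (fun j => f (proj1_sig j)). intros [x Hx] [y Hy] E.
    apply subset_eq_compat. apply Hfi; auto; apply tlt_tle; auto.
Qed.

End Ranks.

Arguments tleaf {K}.
Arguments tsup {K} f.
Arguments tle {K} s t.
Arguments to_rank {K} t.

(** * NOR graphs and their evaluation *)

Section UniversalSet.
Variables (K : Type) (lt : K -> K -> Prop) (HK : regular_cardinal lt).
Variables (pi : K -> K -> K) (h : nat -> K).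
Hypothesis pi_inj : forall a b c d, pi a b = pi c d -> a = c /\ b = d.
Hypothesis h_inj : inj h.

Lemma h_neq i j : i <> j -> h i <> h j.
Proof. intros Hij E. apply Hij, h_inj, E. Qed.

(* A labelled graph on [K]: a leaf [n] tests [eta (leaf_var n) = leaf_val n],
   any other node is a NOR gate over its [edge]-successors.
   [holds t G b eta n] says that [n] takes the value [b] at [eta], by an
   evaluation whose well-foundedness is witnessed by the tree [t]. *)
Record graph : Type := Graph {
  edge : K -> K -> Prop;
  is_leaf : K -> Prop;
  leaf_var : K -> K;
  leaf_val : K -> K }.

Definition leaf_holds (G : graph) (b : bool) (eta : K -> K) (n : K) : Prop :=
  is_leaf G n /\
  if b then eta (leaf_var G n) = leaf_val G n else eta (leaf_var G n) <> leaf_val G n.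

Fixpoint holds (t : tree K) (G : graph) (b : bool) (eta : K -> K) (n : K) : Prop :=
  leaf_holds G b eta n \/
  ~ is_leaf G n /\
  match t with
  | tleaf => False
  | tsup f =>
      if b then forall m, edge G n m -> exists k, holds (f k) G false eta m
      else exists m, edge G n m /\ exists k, holds (f k) G true eta m
  end.

Lemma holds_exclusive G eta t :
  forall t' b n, holds t G b eta n -> holds t' G (negb b) eta n -> False.
Proof.
  induction t as [|f IH]; intros [|f'] b n [Hl|Hi] [Hl'|Hi']; try contradiction;
    try (destruct b; unfold leaf_holds in *; simpl in *; tauto).
  destruct Hi as [_ Hi], Hi' as [_ Hi'], b; simpl in Hi'.
  - destruct Hi' as [m [Hm [k Hk]]]. destruct (Hi m Hm) as [k' Hk'].
    exact (IH k' (f' k) false m Hk' Hk).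
  - destruct Hi as [m [Hm [k Hk]]]. destruct (Hi' m Hm) as [k' Hk'].
    exact (IH k (f' k') true m Hk Hk').
Qed.

Lemma holds_mono G eta s : forall t b n, tle s t -> holds s G b eta n -> holds t G b eta n.
Proof.
  induction s as [|f IH]; intros t b n Hst [Hl|[Hn Hi]];
    try (destruct t; left; exact Hl); [destruct Hi|].
  destruct t as [|g]; [destruct (Hst (h 0))|]. right. split; [exact Hn|].
  destruct b.
  - intros m Hm. destruct (Hi m Hm) as [k Hk]. destruct (Hst k) as [j Hj]. eauto.
  - destruct Hi as [m [Hm [k Hk]]]. destruct (Hst k) as [j Hj]. eauto 6.
Qed.

Definition graph_copy (G G' : graph) (phi : K -> K) : Prop :=
  (forall a, is_leaf G' (phi a) <-> is_leaf G a) /\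
  (forall a, leaf_var G' (phi a) = leaf_var G a) /\
  (forall a, leaf_val G' (phi a) = leaf_val G a) /\
  (forall a m, edge G' (phi a) m <-> exists b, m = phi b /\ edge G a b).

Lemma holds_copy G G' phi : graph_copy G G' phi ->
  forall t b eta a, holds t G' b eta (phi a) <-> holds t G b eta a.
Proof.
  intros [Hleaf [Hvar [Hval Hedge]]].
  assert (Hlh : forall b eta a, leaf_holds G' b eta (phi a) <-> leaf_holds G b eta a).
  { intros b eta a. unfold leaf_holds. rewrite Hleaf, Hvar, Hval. tauto. }
  induction t as [|f IH]; intros b eta a; simpl; rewrite Hlh, Hleaf; [tauto|].
  apply or_iff_compat_l, and_iff_compat_l. destruct b; split.
  - intros Hi m Hm. destruct (Hi (phi m)) as [k Hk]; [apply Hedge; eauto|].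
    exists k. apply IH, Hk.
  - intros Hi m Hm. apply Hedge in Hm. destruct Hm as [b [-> Hb]].
    destruct (Hi b Hb) as [k Hk]. exists k. apply IH, Hk.
  - intros [m [Hm [k Hk]]]. apply Hedge in Hm. destruct Hm as [b [-> Hb]].
    exists b. split; [exact Hb|]. exists k. apply IH, Hk.
  - intros [m [Hm [k Hk]]]. exists (phi m). split; [apply Hedge; eauto|].
    exists k. apply IH, Hk.
Qed.

(** * Borel subsets of the product *)

Lemma size_of_inj (I : Type) (f : I -> K) : inj f -> size_le_kappa_plus K I.
Proof.
  intros Hf. exists (fun x y => lt (f x) (f y)). split; [|split; [|split]].
  - exact (wf_inverse_image _ _ lt f (rc_wf HK)).
  - intros x y z. apply (rc_trans HK).
  - intros x y. destruct (rc_total HK (f x) (f y)) as [H|[H|H]]; auto.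
  - intros i. exists (fun j => f (proj1_sig j)). intros [x Hx] [y Hy] E.
    apply subset_eq_compat, Hf, E.
Qed.

Lemma size_bool : size_le_kappa_plus K bool.
Proof.
  apply (size_of_inj bool (fun b => if b then h 0 else h 1)).
  intros [|] [|] E; auto; exfalso; eapply h_neq; eauto.
Qed.

Lemma size_K : size_le_kappa_plus K K.
Proof. apply (size_of_inj K (fun x => x)). intros x y E. exact E. Qed.

Lemma basic_open_full : basic_open (fun _ : K -> K => True).
Proof.
  right. exists (fun _ => False), (fun x => x). split.
  - intros [f _]. destruct (f (h 0)) as [x []].
  - intros z. split; auto. intros _ x [].
Qed.

Lemma basic_open_at x v : basic_open (fun z : K -> K => z x = v).
Proof.
  right. exists (fun y => y = x), (fun _ => v). split.
  - intros [f Hf].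
    assert (E : f (h 0) = f (h 1)).
    { destruct (f (h 0)) as [y Hy], (f (h 1)) as [y' Hy'].
      apply subset_eq_compat. congruence. }
    apply Hf in E. exact (h_neq 0 1 ltac:(discriminate) E).
  - intros z. split; [intros Hz y ->|intros Hz; apply Hz]; auto.
Qed.

Lemma borel2_iff (P Q : (K -> K) * (K -> K) -> Prop) :
  kappa_kappa_plus_borel2 P -> (forall q, P q <-> Q q) -> kappa_kappa_plus_borel2 Q.
Proof. apply borel_ext. Qed.

Lemma borel2_fst_at x v : kappa_kappa_plus_borel2 (fun q : (K -> K) * (K -> K) => fst q x = v).
Proof.
  apply borel_basic. exists (fun z => z x = v), (fun _ => True).
  split; [apply basic_open_at|split; [apply basic_open_full|tauto]].
Qed.

Lemma borel2_snd_at x v : kappa_kappa_plus_borel2 (fun q : (K -> K) * (K -> K) => snd q x = v).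
Proof.
  apply borel_basic. exists (fun _ => True), (fun z => z x = v).
  split; [apply basic_open_full|split; [apply basic_open_at|tauto]].
Qed.

Lemma borel2_false : kappa_kappa_plus_borel2 (fun _ : (K -> K) * (K -> K) => False).
Proof.
  apply borel_basic. exists (fun _ => False), (fun _ => True).
  split; [left; auto|split; [apply basic_open_full|tauto]].
Qed.

Lemma borel2_and (P Q : (K -> K) * (K -> K) -> Prop) :
  kappa_kappa_plus_borel2 P -> kappa_kappa_plus_borel2 Q ->
  kappa_kappa_plus_borel2 (fun q => P q /\ Q q).
Proof.
  intros HP HQ. apply (borel2_iff (fun q => forall b : bool, (if b then P else Q) q)).
  - apply borel_inter; [exact size_bool|]. intros [|]; assumption.
  - intros q. split; [intros H; exact (conj (H true) (H false))|intros [H1 H2] [|]; auto].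
Qed.

Lemma borel2_or (P Q : (K -> K) * (K -> K) -> Prop) :
  kappa_kappa_plus_borel2 P -> kappa_kappa_plus_borel2 Q ->
  kappa_kappa_plus_borel2 (fun q => P q \/ Q q).
Proof.
  intros HP HQ. apply (borel2_iff (fun q => exists b : bool, (if b then P else Q) q)).
  - apply borel_union; [exact size_bool|]. intros [|]; assumption.
  - intros q. split; [intros [[|] H]; auto|intros [H|H]; [exists true|exists false]; auto].
Qed.

Lemma borel2_imp (P Q : (K -> K) * (K -> K) -> Prop) :
  kappa_kappa_plus_borel2 P -> kappa_kappa_plus_borel2 Q ->
  kappa_kappa_plus_borel2 (fun q => P q -> Q q).
Proof.
  intros HP HQ. apply (borel2_iff (fun q => ~ P q \/ Q q)).
  - apply borel2_or; [apply borel_compl|]; assumption.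
  - intros q. tauto.
Qed.

Lemma borel2_all (F : K -> (K -> K) * (K -> K) -> Prop) :
  (forall k, kappa_kappa_plus_borel2 (F k)) ->
  kappa_kappa_plus_borel2 (fun q => forall k, F k q).
Proof. intros HF. apply borel_inter; [exact size_K|exact HF]. Qed.

Lemma borel2_ex (F : K -> (K -> K) * (K -> K) -> Prop) :
  (forall k, kappa_kappa_plus_borel2 (F k)) ->
  kappa_kappa_plus_borel2 (fun q => exists k, F k q).
Proof. intros HF. apply borel_union; [exact size_K|exact HF]. Qed.

Definition decode_graph (xi : K -> K) : graph :=
  Graph (fun n m => xi (pi (h 0) (pi n m)) = h 0) (fun n => xi (pi (h 1) n) = h 0)
        (fun n => xi (pi (h 2) n)) (fun n => xi (pi (h 3) n)).

Lemma borel2_leaf_holds b n :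
  kappa_kappa_plus_borel2 (fun q => leaf_holds (decode_graph (snd q)) b (fst q) n).
Proof.
  assert (Htest : kappa_kappa_plus_borel2
            (fun q : (K -> K) * (K -> K) => fst q (snd q (pi (h 2) n)) = snd q (pi (h 3) n))).
  { apply (borel2_iff (fun q => exists x v,
             snd q (pi (h 2) n) = x /\ snd q (pi (h 3) n) = v /\ fst q x = v)).
    - apply borel2_ex; intros x. apply borel2_ex; intros v.
      apply borel2_and; [apply borel2_snd_at|].
      apply borel2_and; [apply borel2_snd_at|apply borel2_fst_at].
    - intros q. split; [intros [x [v [<- [<- E]]]]; exact E|intros E; eauto]. }
  unfold leaf_holds; simpl. apply borel2_and; [apply borel2_snd_at|].
  destruct b; [exact Htest|apply borel_compl, Htest].
Qed.

Lemma borel2_holds t : forall b n,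
  kappa_kappa_plus_borel2 (fun q => holds t (decode_graph (snd q)) b (fst q) n).
Proof.
  induction t as [|f IH]; intros b n; simpl;
    (apply borel2_or; [apply borel2_leaf_holds|]);
    (apply borel2_and; [apply borel_compl, borel2_snd_at|]); [exact borel2_false|].
  destruct b.
  - apply borel2_all; intros m. apply borel2_imp; [apply borel2_snd_at|].
    apply borel2_ex; intros k. apply IH.
  - apply borel2_ex; intros m. apply borel2_and; [apply borel2_snd_at|].
    apply borel2_ex; intros k. apply IH.
Qed.

Definition root : K := pi (h 1) (h 0).

Definition universal_set (q : (K -> K) * (K -> K)) : Prop :=
  exists i : rank K, holds (proj1_sig i) (decode_graph (snd q)) true (fst q) root.

Lemma universal_set_borel : kappa_kappa_plus_borel2 universal_set.
Proof.
  apply (borel_union (I := rank K)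
           (fun i q => holds (proj1_sig i) (decode_graph (snd q)) true (fst q) root)).
  - exact (rank_size K pi h pi_inj h_inj).
  - intros i. apply borel2_holds.
Qed.

(** * Borel codes *)

Inductive code : Type := cleaf (x v : K) | cnor (P : K -> Prop) (f : K -> code).

Fixpoint eval (c : code) (eta : K -> K) : Prop :=
  match c with
  | cleaf x v => eta x = v
  | cnor P f => forall k, P k -> ~ eval (f k) eta
  end.

Definition cnot (c : code) : code := cnor (fun k => k = h 0) (fun _ => c).
Definition call (P : K -> Prop) (f : K -> code) : code := cnor P (fun k => cnot (f k)).
Definition cex (P : K -> Prop) (f : K -> code) : code := cnot (cnor P f).

Lemma eval_cnot c eta : eval (cnot c) eta <-> ~ eval c eta.
Proof. simpl. split; [intros H; exact (H (h 0) eq_refl)|intros H k _; exact H]. Qed.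

Lemma eval_call P f eta : eval (call P f) eta <-> forall k, P k -> eval (f k) eta.
Proof.
  unfold call. simpl. setoid_rewrite eval_cnot.
  split; intros H k Pk; [apply NNPP|]; auto.
Qed.

Lemma eval_cex P f eta : eval (cex P f) eta <-> exists k, P k /\ eval (f k) eta.
Proof.
  unfold cex. rewrite eval_cnot. simpl. split.
  - intros H. apply NNPP. intros Hn. apply H. intros k Pk Hk. eauto.
  - intros [k [Pk Hk]] H. exact (H k Pk Hk).
Qed.

Lemma codes_of_family (I : Type) (g : I -> K) (F : I -> (K -> K) -> Prop) : inj g ->
  (forall i, exists c, forall eta, F i eta <-> eval c eta) ->
  exists cF : K -> code, forall i eta, F i eta <-> eval (cF (g i)) eta.
Proof.
  intros Hg HF.
  destruct (choice (fun k c => forall i, g i = k -> forall eta, F i eta <-> eval c eta))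
    as [cF HcF].
  { intros k. destruct (classic (exists i, g i = k)) as [[i <-]|Hk].
    - destruct (HF i) as [c Hc]. exists c. intros i' E. apply Hg in E. subst. exact Hc.
    - exists (cleaf k k). intros i E. exfalso. eauto. }
  exists cF. intros i. apply HcF. reflexivity.
Qed.

Lemma code_of_borel A : kappa_borel A -> exists c, forall eta, A eta <-> eval c eta.
Proof.
  unfold kappa_borel. intros HA.
  induction HA as [A [Hempty|[X [e [_ HX]]]]|A B _ [c Hc] HAB|A _ [c Hc]
                  |I F [g Hg] _ IH|I F [g Hg] _ IH].
  - exists (cex (fun _ => False) (fun _ => cleaf (h 0) (h 0))). intros eta.
    rewrite eval_cex. split; [intros H; destruct (Hempty _ H)|intros [_ [[] _]]].
  - exists (call X (fun x => cleaf x (e x))). intros eta. rewrite eval_call, HX.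
    reflexivity.
  - exists c. intros eta. rewrite <- HAB. apply Hc.
  - exists (cnot c). intros eta. rewrite eval_cnot, Hc. reflexivity.
  - destruct (codes_of_family I g F Hg IH) as [cF HcF].
    exists (cex (fun k => exists i, g i = k) cF). intros eta. rewrite eval_cex. split.
    + intros [i Hi]. exists (g i). split; [eauto|apply HcF, Hi].
    + intros [k [[i <-] Hk]]. exists i. apply HcF, Hk.
  - destruct (codes_of_family I g F Hg IH) as [cF HcF].
    exists (call (fun k => exists i, g i = k) cF). intros eta. rewrite eval_call. split.
    + intros H k [i <-]. apply HcF, H.
    + intros H i. apply HcF, H. eauto.
Qed.

Definition unpair (p : K) : K * K :=
  epsilon (inhabits (h 0, h 0)) (fun ab => p = pi (fst ab) (snd ab)).

Lemma unpair_pi a b : unpair (pi a b) = (a, b).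
Proof.
  unfold unpair.
  assert (E := epsilon_spec (inhabits (h 0, h 0)) (fun ab => pi a b = pi (fst ab) (snd ab))).
  destruct (epsilon _ _) as [c d]. apply pi_inj in E; [|exists (a, b); reflexivity].
  destruct E as [-> ->]. reflexivity.
Qed.

Definition child (k a : K) : K := pi (h 0) (pi k a).

Definition unchild (n : K) : K * K := unpair (snd (unpair n)).

Lemma unchild_child k a : unchild (child k a) = (k, a).
Proof. unfold unchild, child. rewrite unpair_pi. apply unpair_pi. Qed.

Lemma root_not_child k a : root <> child k a.
Proof.
  intros E. apply pi_inj in E. exact (h_neq 1 0 ltac:(discriminate) (proj1 E)).
Qed.

Fixpoint graph_of_code (c : code) : graph :=
  match c with
  | cleaf x v => Graph (fun _ _ => False) (fun n => n = root) (fun _ => x) (fun _ => v)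
  | cnor P f =>
      Graph (fun n m => (n = root /\ exists k, P k /\ m = child k root) \/
                        exists k a b, n = child k a /\ m = child k b /\
                                      edge (graph_of_code (f k)) a b)
            (fun n => exists k a, n = child k a /\ is_leaf (graph_of_code (f k)) a)
            (fun n => leaf_var (graph_of_code (f (fst (unchild n)))) (snd (unchild n)))
            (fun n => leaf_val (graph_of_code (f (fst (unchild n)))) (snd (unchild n)))
  end.

Lemma graph_of_code_copy P f k :
  graph_copy (graph_of_code (f k)) (graph_of_code (cnor P f)) (child k).
Proof.
  assert (Hchild : forall k' a a', child k a = child k' a' -> k = k' /\ a = a').
  { intros k' a a' E. apply (f_equal unchild) in E. rewrite !unchild_child in E.
    injection E. auto. }
  split; [|split; [|split]]; simpl; intros a; try (rewrite unchild_child; reflexivity).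
  - split; [|eauto]. intros [k' [a' [E H]]].
    apply Hchild in E. destruct E as [<- <-]. exact H.
  - intros m. split.
    + intros [[E _]|[k' [a' [b [E [-> H]]]]]].
      * exfalso. exact (root_not_child _ _ (eq_sym E)).
      * apply Hchild in E. destruct E as [<- <-]. eauto.
    + intros [b [-> H]]. right. eauto 7.
Qed.

Lemma graph_of_code_holds c : exists t, forall eta,
  (eval c eta -> holds t (graph_of_code c) true eta root) /\
  (~ eval c eta -> holds t (graph_of_code c) false eta root).
Proof.
  induction c as [x v|P f IH].
  - exists tleaf. intros eta. simpl. unfold leaf_holds. simpl. tauto.
  - destruct (choice _ IH) as [tf Htf]. exists (tsup tf). intros eta.
    assert (Hroot : ~ is_leaf (graph_of_code (cnor P f)) root).
    { intros [k [a [E _]]]. exact (root_not_child k a E). }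
    assert (Hsub := fun k => holds_copy _ _ _ (graph_of_code_copy P f k) (tf k)).
    split; intros Hev; right; (split; [exact Hroot|]); simpl in Hev |- *.
    + intros m [[_ [k [Pk ->]]]|[k [a [b [E _]]]]];
        [|exfalso; exact (root_not_child _ _ E)].
      exists k. apply Hsub, (proj2 (Htf k eta)). exact (Hev k Pk).
    + apply not_all_ex_not in Hev. destruct Hev as [k Hk].
      assert (Pk : P k) by tauto. assert (Ek : eval (f k) eta) by (apply NNPP; tauto).
      exists (child k root). split; [left; eauto|].
      exists k. apply Hsub, (proj1 (Htf k eta)), Ek.
Qed.

Definition truth (P : Prop) : K := if excluded_middle_informative P then h 0 else h 1.

Lemma truth_spec P : truth P = h 0 <-> P.
Proof.
  unfold truth. destruct excluded_middle_informative as [H|H]; [tauto|].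
  split; [intros E; exfalso; exact (h_neq 1 0 ltac:(discriminate) E)|contradiction].
Qed.

Definition encode_graph (G : graph) (p : K) : K :=
  let (i, n) := unpair p in
  if excluded_middle_informative (i = h 0)
  then truth (edge G (fst (unpair n)) (snd (unpair n)))
  else if excluded_middle_informative (i = h 1) then truth (is_leaf G n)
  else if excluded_middle_informative (i = h 2) then leaf_var G n
  else leaf_val G n.

Lemma encode_graph_copy G : graph_copy G (decode_graph (encode_graph G)) (fun n => n).
Proof.
  split; [|split; [|split]]; [intros a|intros a|intros a|intros a m]; simpl;
    unfold encode_graph; rewrite unpair_pi; simpl; rewrite ?unpair_pi; simpl;
    repeat destruct excluded_middle_informative as [E|];
    try (exfalso; apply h_inj in E; discriminate); try congruence.
  - apply truth_spec.
  - rewrite truth_spec. split; [eauto|intros [b [-> H]]; exact H].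
Qed.

Lemma universal_set_universal A :
  kappa_borel A -> exists xi, forall eta, A eta <-> universal_set (eta, xi).
Proof.
  intros HA. destruct (code_of_borel A HA) as [c Hc].
  destruct (graph_of_code_holds c) as [t Ht].
  exists (encode_graph (graph_of_code c)). intros eta. unfold universal_set; simpl.
  assert (Hcopy := holds_copy _ _ _ (encode_graph_copy (graph_of_code c))).
  split.
  - intros Ha. exists (to_rank t). apply Hcopy.
    apply (holds_mono _ _ t); [apply tle_to_rank|]. apply (proj1 (Ht eta)), Hc, Ha.
  - intros [i Hi]. apply Hcopy in Hi. apply Hc, NNPP. intros Hne.
    exact (holds_exclusive _ _ _ _ _ _ Hi (proj2 (Ht eta) Hne)).
Qed.

End UniversalSet.

Theorem theorem3p18 (K : Type) (lt : K -> K -> Prop) (HK : regular_cardinal lt) :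
  exists R : (K -> K) * (K -> K) -> Prop,
    kappa_kappa_plus_borel2 R /\
    forall A : (K -> K) -> Prop, kappa_borel A ->
      exists xi : K -> K, forall eta : K -> K, A eta <-> R (eta, xi).
Proof.
  destruct (pairing K lt HK) as [pi pi_inj].
  destruct (rc_infinite HK) as [h h_inj].
  exists (universal_set K pi h). split.
  - exact (universal_set_borel K lt HK pi h pi_inj h_inj).
  - exact (universal_set_universal K pi h pi_inj h_inj).
Qed.
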